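(* Let $G$ be a connected simple graph on $n\ge2$ vertices labeled so that $m_1+d_1\ge m_2+d_2\ge\cdots\ge m_n+d_n$, where $m_i=\frac{\sum_{j\sim i}d_j}{d_i}$. Let $\Delta$ be the maximum degree and $N=\max_{i\sim j}d_j/d_i$. Then for $1\le i\le n$, \[\rho(Q(G))\le \frac{m_i+d_i+\Delta-N+\sqrt{(m_i+d_i-\Delta+N)^2+4N\sum_{k=1}^{i-1}(m_k+d_k-m_i-d_i)}}{2}.\] Equality holds if and only if $m_1+d_1=\cdots=m_n+d_n$, or $i\ge2$ and $G$ is a bidegreed graph with $m_1+d_1>m_2+d_2=\cdots=m_n+d_n$ and $d_1=n-1>d_2=\cdots=d_n$.
   Context: $Q(G)=D(G)+A(G)$ is the signless Laplacian matrix ($A(G)$ adjacency matrix, $D(G)$ diagonal degree matrix), $d_i$ is the degree of $v_i$, $i\sim j$ means adjacency, $\rho$ is the spectral radius. A bidegreed graph has exactly two distinct vertex degrees. An empty sum equals $0$. *)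

From HB Require Import structures.
From mathcomp Require Import all_boot all_order all_algebra.
Set Implicit Arguments. Unset Strict Implicit. Unset Printing Implicit Defensive.
Import Order.TTheory GRing.Theory Num.Theory.
Local Open Scope ring_scope.

Definition simple_graph (n : nat) (adj : rel 'I_n) : Prop :=
  symmetric adj /\ irreflexive adj.

Definition connected_graph (n : nat) (adj : rel 'I_n) : Prop :=
  forall i j : 'I_n, connect adj i j.

Definition deg (n : nat) (adj : rel 'I_n) (i : 'I_n) : nat := #|[set j | adj i j]|.

Definition maxdeg (n : nat) (adj : rel 'I_n) : nat := (\max_(i < n) deg adj i)%N.

Definition avgdeg (R : fieldType) (n : nat) (adj : rel 'I_n) (i : 'I_n) : R :=
  (\sum_(j | adj i j) (deg adj j)%:R) / (deg adj i)%:R.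

Definition md (R : fieldType) (n : nat) (adj : rel 'I_n) (i : 'I_n) : R :=
  avgdeg R adj i + (deg adj i)%:R.

(* N = max_{i ~ j} d_j / d_i  (all these ratios are positive) *)
Definition Nratio (R : realFieldType) (n : nat) (adj : rel 'I_n) : R :=
  \big[Num.max/0]_(i < n) \big[Num.max/0]_(j < n | adj i j)
     ((deg adj j)%:R / (deg adj i)%:R).

Definition adjmx (R : fieldType) (n : nat) (adj : rel 'I_n) : 'M[R]_n :=
  \matrix_(i, j) (adj i j)%:R.

Definition degmx (R : fieldType) (n : nat) (adj : rel 'I_n) : 'M[R]_n :=
  \matrix_(i, j) (if i == j then (deg adj i)%:R else 0).

Definition signless_laplacian (R : fieldType) (n : nat) (adj : rel 'I_n) : 'M[R]_n :=
  degmx R adj + adjmx R adj.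

(* r is the spectral radius of A: the maximum modulus of an eigenvalue.
   (Used for real symmetric matrices, whose eigenvalues are all real.) *)
Definition is_spectral_radius (R : realFieldType) (n : nat) (A : 'M[R]_n) (r : R) : Prop :=
  (exists2 l, eigenvalue A l & `|l| = r) /\ (forall l, eigenvalue A l -> `|l| <= r).

Definition bidegreed (n : nat) (adj : rel 'I_n) : Prop :=
  size (undup [seq deg adj i | i <- enum 'I_n]) = 2%N.

From HB Require Import structures.
From mathcomp Require Import all_boot all_order all_algebra.
From mathcomp Require Import spectral complex polyrcf ring lra.
Import Order.TTheory GRing.Theory Num.Theory.
Set Implicit Arguments. Unset Strict Implicit. Unset Printing Implicit Defensive.
Local Open Scope ring_scope.

(* The proof is a weighted Collatz-Wielandt argument.  With theta the claimed
   bound, s = theta - Delta + N and c_k = t_k - t_i for k < i (0 otherwise),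
   the positive vector w_k = d_k (1 + c_k / s) satisfies Q w <= theta w: the
   choice of theta makes (theta - t_i) s = N (c_1 + ... + c_n), and then the
   row slack theta w_k - (Q w)_k splits into four visibly nonnegative terms. *)

(* A real symmetric matrix of positive size has a real eigenvalue: take a
   complex eigenvector v; the Rayleigh quotient v A v^* / v v^* is both equal
   to the eigenvalue and self-conjugate. *)
Lemma symmetric_mx_eigenvalue (R : rcfType) n (A : 'M[R]_n) :
  (0 < n)%N -> (forall i j, A i j = A j i) -> exists a, eigenvalue A a.
Proof.
move=> n_gt0 symA; pose f := real_complex R.
have [z ez] := eigenvalue_closed (map_mx f A) n_gt0.
have [v hv vnz] := eigenvalueP ez.
suff zr : z \is Num.real.
  exists (complex.Re z); rewrite eigenvalue_root_char -(fmorph_root f) map_char_poly.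
  by rewrite [X in root _ X](RRe_real zr) -eigenvalue_root_char.
have f_conj a : (f a)^* = f a by apply: conj_Creal; rewrite complex_real.
pose s := \sum_j v 0 j * (v 0 j)^*.
pose X := \sum_j (v *m map_mx f A) 0 j * (v 0 j)^*.
have s_real : s^* = s.
  by rewrite rmorph_sum; apply: eq_bigr => j _; rewrite rmorphM /= conjCK mulrC.
have s_neq0 : s != 0.
  apply: contra vnz => /eqP s0; apply/eqP/rowP => j; rewrite mxE.
  have norm_sum0 : \sum_j `|v 0 j| ^+ 2 = 0.
    by rewrite -[RHS]s0; apply: eq_bigr => k _; rewrite normCK.
  have /eqP := psumr_eq0P (fun k _ => exprn_ge0 2 (normr_ge0 (v 0 k))) norm_sum0 (i := j) isT.
  by rewrite expf_eq0 /= normr_eq0 => /eqP.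
have X_eig : X = z * s by rewrite mulr_sumr; apply: eq_bigr => j _; rewrite hv mxE mulrA.
have X_real : X^* = X.
  have -> : X = \sum_j \sum_i v 0 i * f (A i j) * (v 0 j)^*.
    by apply: eq_bigr => j _; rewrite mxE mulr_suml; apply: eq_bigr => i _; rewrite mxE.
  rewrite rmorph_sum exchange_big /=; apply: eq_bigr => i _.
  rewrite rmorph_sum; apply: eq_bigr => j _.
  by rewrite !rmorphM /= conjCK f_conj symA [RHS]mulrC [v 0 i * _]mulrC mulrA.
rewrite CrealE; apply/eqP; apply: (mulIf s_neq0).
by rewrite -X_eig -{1}s_real -rmorphM -X_eig.
Qed.

Lemma max_norm_in_seq (R : realDomainType) (s : seq R) : s != [::] ->
  exists2 x, x \in s & forall y, y \in s -> `|y| <= `|x|.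
Proof.
elim: s => // a s IH _; case: (eqVneq s [::]) => [-> | /IH [b bs bmax]].
  by exists a; rewrite ?mem_head // => y; rewrite inE => /eqP ->.
have [ab | ba] := leP `|a| `|b|.
  by exists b; rewrite ?inE ?bs ?orbT // => y; rewrite inE => /orP [/eqP -> | /bmax].
exists a; rewrite ?mem_head // => y; rewrite inE => /orP [/eqP -> // | /bmax yb].
exact: le_trans yb (ltW ba).
Qed.

(* Over a real closed field, a matrix with some eigenvalue has a spectral
   radius: the largest absolute value among the (finitely many) real roots of
   its characteristic polynomial. *)
Lemma spectral_radius_exists (R : rcfType) n (A : 'M[R]_n) :
  (exists a, eigenvalue A a) -> exists r, is_spectral_radius A r.
Proof.
move=> [a ea]; have cp_neq0 : char_poly A != 0 by rewrite monic_neq0 ?char_poly_monic.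
have eigE l : eigenvalue A l = (l \in rootsR (char_poly A)).
  by rewrite eigenvalue_root_char -(roots_on_rootsR cp_neq0) itv_boundlr.
have s_neq0 : rootsR (char_poly A) != [::] by move: ea; rewrite eigE; case: rootsR.
have [x xs xmax] := max_norm_in_seq s_neq0.
by exists `|x|; split => [|l]; [exists x; rewrite ?eigE | rewrite eigE => /xmax].
Qed.

Lemma connect_preserves (T : finType) (e : rel T) (P : pred T) :
  (forall a b, e a b -> P a -> P b) -> forall a b, connect e a b -> P a -> P b.
Proof.
move=> P_edge a b /connectP [p pth ->]; elim: p a pth => [|c p IH] a //=.
by case/andP=> eac pth Pa; apply: IH pth (P_edge _ _ eac Pa).
Qed.

Section SubeigenvectorBound.
Variables (R : realFieldType) (n : nat) (Q : 'M[R]_n) (w : 'I_n -> R) (th : R).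
Hypothesis w_gt0 : forall j, 0 < w j.
Hypothesis Q_ge0 : forall j k, 0 <= Q j k.
Hypothesis Q_sym : forall j k, Q j k = Q k j.
Hypothesis Qw_le : forall k, \sum_j Q k j * w j <= th * w k.
Variables (l : R) (v : 'rV[R]_n).
Hypothesis v_eigen : v *m Q = l *: v.
Hypothesis v_neq0 : v != 0.

(* The triangle inequality applied to the eigen-equation in coordinate k. *)
Lemma eigen_coord_le k : `|l| * `|v 0 k| <= \sum_j Q k j * `|v 0 j|.
Proof.
rewrite -normrM; have -> : l * v 0 k = (v *m Q) 0 k by rewrite v_eigen !mxE.
rewrite mxE; apply: le_trans (ler_norm_sum _ _ _) _; apply: ler_sum => j _.
by rewrite normrM (ger0_norm (Q_ge0 _ _)) Q_sym mulrC.
Qed.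

(* Scale |v| under w: t is the largest ratio |v_j| / w_j, attained at k0. *)
Lemma eigen_scale : exists t k0,
  [/\ 0 < t, `|v 0 k0| = t * w k0 & forall j, `|v 0 j| <= t * w j].
Proof.
have [j0 vj0] : exists j, v 0 j != 0.
  apply/existsP; apply: contraR v_neq0 => /existsPn v0; apply/eqP/rowP => j.
  by rewrite mxE; apply/eqP; rewrite -[_ == _]negbK v0.
pose F j := `|v 0 j| / w j.
have [k0 _ k0max] := @arg_maxP _ _ _ j0 predT F isT.
exists (F k0), k0; split=> [|//|j].
- apply: lt_le_trans (k0max j0 isT).
  by rewrite divr_gt0 ?w_gt0 // normr_gt0.
- by rewrite /F divfK // gt_eqF.
- by rewrite -ler_pdivrMr ?w_gt0 //; apply: k0max.
Qed.

Lemma scaled_row_le t k : (forall j, `|v 0 j| <= t * w j) ->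
  \sum_j Q k j * `|v 0 j| <= t * (\sum_j Q k j * w j).
Proof.
move=> vt; rewrite mulr_sumr; apply: ler_sum => j _.
by rewrite mulrCA; apply: ler_wpM2l.
Qed.

Lemma eigen_norm_le : `|l| <= th.
Proof.
have [t [k0 [t_gt0 vk0 vt]]] := eigen_scale.
have := le_trans (eigen_coord_le k0) (scaled_row_le k0 vt).
move/le_trans/(_ (ler_wpM2l (ltW t_gt0) (Qw_le k0))).
by rewrite vk0 mulrCA ler_pM2l // ler_pM2r ?w_gt0.
Qed.

Section Equality.
Variable e : rel 'I_n.
Hypothesis e_pos : forall a b, e a b -> 0 < Q a b.
Hypothesis e_connected : forall a b, connect e a b.
Hypothesis l_extremal : `|l| = th.

(* If |v| touches t w at k, then row k of Q w is tight and |v| touches t w at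
   every e-neighbour of k: all inequalities in the chain for row k are
   equalities, and the slack sum has nonnegative, edge-wise positive terms. *)
Lemma touch_spreads t k : 0 < t -> (forall j, `|v 0 j| <= t * w j) ->
  `|v 0 k| = t * w k ->
  (forall j, e k j -> `|v 0 j| = t * w j) /\ \sum_j Q k j * w j = th * w k.
Proof.
move=> t_gt0 vt vk.
have h1 := eigen_coord_le k; have h2 := scaled_row_le k vt.
have h3 := ler_wpM2l (ltW t_gt0) (Qw_le k).
rewrite vk l_extremal mulrCA in h1.
have row_tight : \sum_j Q k j * `|v 0 j| = t * (\sum_j Q k j * w j).
  by apply/le_anti; rewrite h2 (le_trans h3 h1).
split=> [j ekj|]; last first.
  apply: (mulfI (lt0r_neq0 t_gt0)).
  by apply/le_anti; rewrite h3 -row_tight h1.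
have slack0 : \sum_j Q k j * (t * w j - `|v 0 j|) = 0.
  under eq_bigr do rewrite mulrBr mulrCA.
  by rewrite sumrB -mulr_sumr row_tight subrr.
have slack_ge0 i : true -> 0 <= Q k i * (t * w i - `|v 0 i|).
  by rewrite mulr_ge0 // subr_ge0.
move/eqP: (psumr_eq0P slack_ge0 slack0 (i := j) isT).
by rewrite mulf_eq0 gt_eqF ?e_pos //= subr_eq0 => /eqP.
Qed.

(* Touching spreads from the maximising vertex k0 along the connected
   relation e to every vertex, so every row of Q w is tight. *)
Lemma eigen_extremal_tight k : \sum_j Q k j * w j = th * w k.
Proof.
have [t [k0 [t_gt0 vk0 vt]]] := eigen_scale.
have touch j : `|v 0 j| == t * w j.
  apply: (connect_preserves (P := fun j => `|v 0 j| == t * w j) _ (e_connected k0 j)).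
    by move=> a b eab /eqP va; apply/eqP; apply: (touch_spreads t_gt0 vt va).1.
  exact/eqP.
exact: (touch_spreads t_gt0 vt (eqP (touch k))).2.
Qed.

End Equality.
End SubeigenvectorBound.

Section GraphFacts.
Variables (n : nat) (adj : rel 'I_n).
Hypothesis hG : simple_graph adj.
Hypothesis hn : (2 <= n)%N.
Hypothesis hconn : connected_graph adj.

Let nbhd_sub k : [set j | adj k j] \subset [set~ k].
Proof. by apply/subsetP => j; rewrite !inE; apply: contraTneq => ->; rewrite hG.2. Qed.

Let card_others (k : 'I_n) : #|[set~ k]| = n.-1.
Proof. by rewrite cardsC1 card_ord. Qed.

Lemma deg_le k : (deg adj k <= n.-1)%N.
Proof. by rewrite -(card_others k) subset_leq_card. Qed.

Lemma deg_fullP k : deg adj k = n.-1 <-> forall j, j != k -> adj k j.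
Proof.
split=> [dk j jk | full].
  have [_] := subset_leqif_cards (nbhd_sub k).
  rewrite card_others -/(deg adj k) dk eqxx => /esym/eqP nbhdE.
  by have := jk; rewrite -in_setC1 -nbhdE inE.
apply/eqP; rewrite eqn_leq deg_le -(card_others k) subset_leq_card //.
by apply/subsetP => j; rewrite !inE => /full.
Qed.

Lemma deg_gt0 k : (0 < deg adj k)%N.
Proof.
have : (0 < #|[set~ k]|)%N by rewrite card_others ltn_predRL.
case/card_gt0P => j; rewrite !inE => jk.
have /connectP [[|a p] /= pth jE] := hconn k j; first by rewrite jE eqxx in jk.
by apply/card_gt0P; exists a; rewrite inE; case/andP: pth.
Qed.

Lemma deg_gt0R (R : numDomainType) k : 0 < (deg adj k)%:R :> R.
Proof. by rewrite ltr0n deg_gt0. Qed.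

Lemma deg_le_maxdeg k : (deg adj k <= maxdeg adj)%N.
Proof. exact: (leq_bigmax_cond (F := deg adj) k isT). Qed.

Lemma maxdeg_attained (k0 : 'I_n) : exists u, deg adj u = maxdeg adj.
Proof. by exists [arg max_(i > k0) deg adj i]; rewrite /maxdeg (bigop.bigmax_eq_arg k0). Qed.

Lemma Nratio_ub (R : realFieldType) a b :
  adj a b -> (deg adj b)%:R / (deg adj a)%:R <= Nratio R adj.
Proof. by move=> ab; rewrite /Nratio (bigD1 a) //= le_max (bigD1 b) //= le_max lexx. Qed.

Lemma Nratio_le (R : realFieldType) (M : R) : 0 <= M ->
  (forall a b, adj a b -> (deg adj b)%:R / (deg adj a)%:R <= M) -> Nratio R adj <= M.
Proof.
move=> M_ge0 ratio_le; have max_le (x y : R) : x <= M -> y <= M -> Num.max x y <= M.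
  by rewrite ge_max => -> ->.
apply: (big_ind (fun x => x <= M)) => // a _.
by apply: (big_ind (fun x => x <= M)) => // b; apply: ratio_le.
Qed.

Lemma Nratio_gt0 (R : realFieldType) : 0 < Nratio R adj.
Proof.
pose a : 'I_n := Ordinal (ltnW hn).
have /card_gt0P [b] := deg_gt0 a; rewrite inE => ab.
by apply: lt_le_trans (Nratio_ub R ab); rewrite divr_gt0 ?deg_gt0R.
Qed.

Lemma deg_avgdeg (R : numFieldType) k :
  (deg adj k)%:R * avgdeg R adj k = \sum_(j | adj k j) (deg adj j)%:R.
Proof. by rewrite /avgdeg mulrC divfK // gt_eqF ?deg_gt0R. Qed.

Lemma regular_md (R : numFieldType) D :
  (forall k, deg adj k = D) -> forall k, md R adj k = (D + D)%:R.
Proof.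
move=> regD k; have D_gt0 : (0 < D)%N by rewrite -(regD k) deg_gt0.
rewrite /md /avgdeg regD (eq_bigr (fun _ => D%:R)) => [|j _]; last by rewrite regD.
rewrite sumr_const; have -> : #|adj k| = D by rewrite -(regD k) /deg cardsE.
by rewrite -[D%:R *+ D]mulr_natl mulfK ?natrD // pnatr_eq0 -lt0n.
Qed.

Lemma signless_laplacian_sym (R : fieldType) a b :
  signless_laplacian R adj a b = signless_laplacian R adj b a.
Proof.
rewrite !mxE hG.1; congr (_ + _).
by case: eqVneq => [->|ab]; rewrite ?eqxx // eq_sym (negbTE ab).
Qed.

Lemma signless_laplacian_ge0 (R : numFieldType) a b : 0 <= signless_laplacian R adj a b.
Proof. by rewrite !mxE addr_ge0 //; case: eqP. Qed.

Lemma signless_laplacian_adj (R : numFieldType) a b :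
  adj a b -> 0 < signless_laplacian R adj a b.
Proof. by move=> ab; rewrite !mxE ab ltr_wpDl //; case: eqP. Qed.

Lemma signless_laplacian_row (R : fieldType) (w : 'I_n -> R) k :
  \sum_j signless_laplacian R adj k j * w j
  = (deg adj k)%:R * w k + \sum_(j | adj k j) w j.
Proof.
under eq_bigr => j _ do rewrite !mxE mulrDl.
rewrite big_split /=; congr (_ + _).
  rewrite (bigD1 k) //= eqxx big1 ?addr0 // => j /negbTE.
  by rewrite eq_sym => ->; rewrite mul0r.
rewrite [RHS]big_mkcond; apply: eq_bigr => j _.
by case: (adj k j); rewrite ?mul1r ?mul0r.
Qed.

Lemma Nratio_hub (R : realFieldType) (hub k1 : 'I_n) : k1 != hub ->
  deg adj hub = n.-1 -> (forall k, k != hub -> deg adj k = deg adj k1) ->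
  Nratio R adj = (deg adj hub)%:R / (deg adj k1)%:R.
Proof.
move=> k1_hub hub_full degE; apply/le_anti/andP; split.
  apply: Nratio_le => [|a b _]; first by rewrite divr_ge0.
  have k1_a : (deg adj k1)%:R <= (deg adj a)%:R :> R.
    rewrite ler_nat; case: (eqVneq a hub) => [->|/degE -> //].
    by rewrite hub_full deg_le.
  apply: le_trans (ler_wpM2l _ _) (ler_wpM2r _ _); rewrite ?invr_ge0 //.
    by rewrite lef_pV2 ?posrE ?deg_gt0R.
  by rewrite ler_nat hub_full deg_le.
by apply: Nratio_ub; rewrite hG.1; apply: (proj1 (deg_fullP hub)).
Qed.

End GraphFacts.

Lemma bidegreed_hub n (adj : rel 'I_n) (hub k1 : 'I_n) : k1 != hub ->
  (forall k, k != hub -> deg adj k = deg adj k1) -> deg adj k1 != deg adj hub ->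
  bidegreed adj.
Proof.
move=> k1_hub degE deg_neq; rewrite /bidegreed.
have -> : size (undup [seq deg adj i | i <- enum 'I_n]) = size [:: deg adj hub; deg adj k1].
  apply/perm_size/uniq_perm; rewrite ?undup_uniq //= ?inE 1?eq_sym ?deg_neq // => x.
  rewrite mem_undup !inE; apply/mapP/idP => [[y _ ->] | /orP [] /eqP ->].
  - by case: (eqVneq y hub) => [->|/degE ->]; rewrite eqxx ?orbT.
  - by exists hub; rewrite ?mem_enum.
  - by exists k1; rewrite ?mem_enum.
by [].
Qed.

Lemma add_sqrt_gt0 (R : rcfType) (u c : R) : 0 <= c -> 0 < u \/ 0 < c ->
  0 < u + Num.sqrt (u ^+ 2 + c).
Proof.
move=> c_ge0 [u_gt0 | c_gt0]; first by rewrite ltr_pwDl ?sqrtr_ge0.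
have norm_lt : `|u| < Num.sqrt (u ^+ 2 + c).
  by rewrite -sqrtr_sqr ltr_sqrt ?ltrDl // ltr_wpDl ?sqr_ge0.
have := ler_norm (- u); rewrite normrN; lra.
Qed.

(* The algebraic identity behind the slack decomposition of Lemma
   [slack_decomposition]: with s = th - Delta + N and (th - m_i) s = N T,
   where T = Cadj + Cnon + c splits the total excess into the part on the
   neighbours of k, the part on the other non-neighbours and c = c_k. *)
Lemma slack_identity (F : fieldType)
    (th Delta N s T dk mk c Cadj DCadj Dadj Cnon mi : F) :
  s != 0 -> s = th - Delta + N -> (th - mi) * s = N * T ->
  T = Cadj + Cnon + c -> Dadj = dk * mk ->
  th * (dk * (1 + c / s)) - (dk * (dk * (1 + c / s)) + (Dadj + DCadj / s)) =
  (N * dk * Cadj - DCadj) / s + N * dk / s * Cnon + dk * (mi - (mk + dk) + c)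
  + dk * (Delta - dk) * c / s.
Proof.
move=> s_neq0 sE thE TE ->; rewrite TE in thE.
have -> : mi = th - N * (Cadj + Cnon + c) / s by rewrite -thE; field.
have -> : Delta = th + N - s by rewrite sE; ring.
by field.
Qed.

Section WeightedBound.
Variables (R : rcfType) (n : nat) (adj : rel 'I_n).
Hypothesis hn : (2 <= n)%N.
Hypothesis hG : simple_graph adj.
Hypothesis hconn : connected_graph adj.
Hypothesis hord : forall i j : 'I_n, (i <= j)%N -> md R adj j <= md R adj i.
Variable i : 'I_n.

Local Notation dg k := ((deg adj k)%:R : R).
Local Notation mu k := (md R adj k).
Local Notation N := (Nratio R adj).
Local Notation Delta := ((maxdeg adj)%:R : R).
Local Notation Q := (signless_laplacian R adj).

Let v0 : 'I_n := Ordinal (ltnW hn).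
Let v1 : 'I_n := Ordinal hn.
Let neq_v0 (k : 'I_n) : (k != v0) = (0 < k)%N.
Proof. by rewrite lt0n; congr negb; apply/eqP/eqP => [->|k0] //; apply: val_inj. Qed.
Let N_gt0 : 0 < N := Nratio_gt0 hn hconn R.
Let dg_gt0 (k : 'I_n) : 0 < dg k := deg_gt0R hn hconn R k.

Definition excess (k : 'I_n) : R := if (k < i)%N then mu k - mu i else 0.

Definition bound : R :=
  (mu i + Delta - N
   + Num.sqrt ((mu i - Delta + N) ^+ 2
               + 4 * N * \sum_(k < n | (k < i)%N) (mu k - mu i))) / 2.
Definition shift : R := bound - Delta + N.

Definition weight (k : 'I_n) : R := dg k * (1 + excess k / shift).

Lemma excess_ge0 k : 0 <= excess k.
Proof. by rewrite /excess; case: ltnP => // ki; rewrite subr_ge0 hord // ltnW. Qed.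

Lemma sum_excess_ge0 : 0 <= \sum_k excess k.
Proof. by apply: sumr_ge0 => k _; apply: excess_ge0. Qed.

Lemma sum_excess : \sum_k excess k = \sum_(k < n | (k < i)%N) (mu k - mu i).
Proof. by rewrite [RHS]big_mkcond. Qed.

(* The first vertex has m + d at least Delta: it dominates a vertex of
   maximum degree, whose m + d is at least its degree. *)
Lemma maxdeg_le_md_first : Delta <= mu v0.
Proof.
have [u uE] := maxdeg_attained adj v0.
apply: le_trans (hord (i := v0) (j := u) (leq0n u)); rewrite /md -uE ler_wpDl //.
by rewrite /avgdeg divr_ge0 ?sumr_ge0.
Qed.

(* The shift is positive: when the total excess vanishes, t_i = t_1 >= Delta
   and the square root term is |t_i - Delta + N|. *)
Lemma shift_gt0 : 0 < shift.
Proof.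
have T_ge0 : 0 <= 4 * N * \sum_k excess k.
  by rewrite !mulr_ge0 ?sum_excess_ge0 ?(ltW N_gt0).
have -> : shift = (mu i - Delta + N
                   + Num.sqrt ((mu i - Delta + N) ^+ 2 + 4 * N * \sum_k excess k)) / 2.
  by rewrite sum_excess /shift /bound; field.
rewrite divr_gt0 // add_sqrt_gt0 //.
have [T_gt0 | T_eq0] := ltrP 0 (4 * N * \sum_k excess k); first by right.
left; have Tsum0 : \sum_k excess k = 0.
  apply/le_anti; rewrite sum_excess_ge0 andbT.
  by rewrite -(pmulr_rle0 _ (mulr_gt0 (ltr0n R 4) N_gt0)).
have mi : mu i = mu v0.
  case: (posnP i) => [i0 | i_gt0]; first by congr md; apply: val_inj.
  have /eqP := psumr_eq0P (fun k _ => excess_ge0 k) Tsum0 (i := v0) isT.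
  by rewrite /excess /= i_gt0 subr_eq0 => /eqP.
by have := maxdeg_le_md_first; have := N_gt0; rewrite mi; lra.
Qed.

(* theta is the larger root of (x - t_i) (x - Delta + N) = N T, T being the
   total excess. *)
Lemma bound_equation : (bound - mu i) * shift = N * \sum_k excess k.
Proof.
rewrite /shift /bound -sum_excess; set u := mu i - Delta + N; set T := \sum_k excess k.
have r2 : Num.sqrt (u ^+ 2 + 4 * N * T) ^+ 2 = u ^+ 2 + 4 * N * T.
  by rewrite sqr_sqrtr // addr_ge0 ?sqr_ge0 // !mulr_ge0 ?sum_excess_ge0 ?(ltW N_gt0).
set r := Num.sqrt _ in r2 *.
have -> : N * T = (r ^+ 2 - u ^+ 2) / 4 by rewrite r2; field.
by rewrite /u; field.
Qed.

Lemma weight_gt0 k : 0 < weight k.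
Proof.
rewrite /weight mulr_gt0 ?dg_gt0 //.
by rewrite ltr_wpDr ?divr_ge0 ?excess_ge0 ?(ltW shift_gt0).
Qed.

(* The slack theta w_k - (Q w)_k splits into four nonnegative parts: along the
   neighbours of k (nonnegative since d_j <= N d_k on edges), along the other
   non-neighbours, the ordering slack m_i + d_i - m_k - d_k + c_k, and the
   degree slack Delta - d_k. *)
Definition slack_adj (k : 'I_n) : R :=
  (\sum_(j | adj k j) (N * dg k - dg j) * excess j) / shift.
Definition slack_nonadj (k : 'I_n) : R :=
  N * dg k / shift * \sum_(j | (j != k) && ~~ adj k j) excess j.
Definition slack_md (k : 'I_n) : R := dg k * (mu i - mu k + excess k).
Definition slack_deg (k : 'I_n) : R := dg k * (Delta - dg k) * excess k / shift.

Lemma slack_decomposition k :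
  bound * weight k - \sum_j Q k j * weight j
  = slack_adj k + slack_nonadj k + slack_md k + slack_deg k.
Proof.
rewrite signless_laplacian_row.
have nbhd_weight : \sum_(j | adj k j) weight j =
    \sum_(j | adj k j) dg j + (\sum_(j | adj k j) dg j * excess j) / shift.
  by rewrite mulr_suml -big_split; apply: eq_bigr => j _; rewrite /weight mulrDr mulr1 mulrA.
have slack_adjE : slack_adj k = (N * dg k * \sum_(j | adj k j) excess j
    - \sum_(j | adj k j) dg j * excess j) / shift.
  by rewrite /slack_adj mulr_sumr -sumrB; congr (_ / _); apply: eq_bigr => j _; rewrite mulrBl.
have excess_split : \sum_j excess j = \sum_(j | adj k j) excess j
    + \sum_(j | (j != k) && ~~ adj k j) excess j + excess k.
  rewrite (bigD1 k) //= addrC (bigID (adj k)) /=; congr (_ + _ + _).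
  by apply: eq_bigl => j; case: eqVneq => [->|]; rewrite ?hG.2 ?andbT.
rewrite nbhd_weight slack_adjE /slack_nonadj /slack_md /slack_deg /weight [mu k]/md.
apply: (slack_identity (T := \sum_j excess j)) => //.
- exact: lt0r_neq0 shift_gt0.
- exact: bound_equation.
- by rewrite deg_avgdeg.
Qed.

Lemma slacks_ge0 k :
  [/\ 0 <= slack_adj k, 0 <= slack_nonadj k, 0 <= slack_md k & 0 <= slack_deg k].
Proof.
have s_ge0 := ltW shift_gt0; have dk_ge0 := ltW (dg_gt0 k); split.
- rewrite divr_ge0 // sumr_ge0 // => j kj.
  by rewrite mulr_ge0 ?excess_ge0 // subr_ge0 -ler_pdivrMr // Nratio_ub.
- rewrite mulr_ge0 ?divr_ge0 ?mulr_ge0 ?(ltW N_gt0) //.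
  by apply: sumr_ge0 => j _; apply: excess_ge0.
- rewrite mulr_ge0 // /excess; case: ltnP => ki; first by rewrite addrA addrNK subrr.
  by rewrite addr0 subr_ge0 hord.
- by rewrite divr_ge0 // !mulr_ge0 ?excess_ge0 // subr_ge0 ler_nat deg_le_maxdeg.
Qed.

Lemma weight_subeigen k : \sum_j Q k j * weight j <= bound * weight k.
Proof.
rewrite -subr_ge0 slack_decomposition.
by case: (slacks_ge0 k) => *; rewrite !addr_ge0.
Qed.

(* The combinatorial content of "all four slacks vanish in every row". *)
Definition tight_conditions : Prop :=
  [/\ forall k j, adj k j -> (N * dg k - dg j) * excess j = 0,
      forall k j, j != k -> ~~ adj k j -> excess j = 0,
      forall k, mu i - mu k + excess k = 0 &
      forall k, (Delta - dg k) * excess k = 0].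

Lemma weight_eigenP :
  (forall k, \sum_j Q k j * weight j = bound * weight k) <-> tight_conditions.
Proof.
have s_neq0 := lt0r_neq0 shift_gt0; have N_neq0 := lt0r_neq0 N_gt0.
split=> [tight | [adj0 nonadj0 md0 deg0] k]; last first.
  apply/eqP; rewrite eq_sym -subr_eq0 slack_decomposition.
  rewrite /slack_adj /slack_nonadj /slack_md /slack_deg md0 -[_ * _ * excess k]mulrA deg0.
  rewrite big1 => [|j kj]; last exact: adj0.
  rewrite big1 => [|j /andP[]]; last exact: nonadj0.
  by rewrite !(mul0r, mulr0, addr0).
have slacks0 k : [/\ slack_adj k = 0, slack_nonadj k = 0, slack_md k = 0 & slack_deg k = 0].
  have := slack_decomposition k; rewrite tight subrr.
  by case: (slacks_ge0 k) => *; split; lra.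
split=> [k j kj | k j jk kj | k | k].
- case: (slacks0 k) => /eqP + _ _ _; rewrite mulf_eq0 invr_eq0 (negbTE s_neq0) orbF.
  have term_ge0 x : adj k x -> 0 <= (N * dg k - dg x) * excess x.
    by move=> kx; rewrite mulr_ge0 ?excess_ge0 // subr_ge0 -ler_pdivrMr // Nratio_ub.
  by move=> /eqP sum0; apply: (psumr_eq0P term_ge0 sum0 (i := j)).
- case: (slacks0 k) => _ /eqP + _ _.
  rewrite !mulf_eq0 invr_eq0 (negbTE s_neq0) (negbTE N_neq0) gt_eqF //= => /eqP.
  move=> sum0; apply: (psumr_eq0P (fun x _ => excess_ge0 x) sum0 (i := j)).
  by rewrite jk kj.
- case: (slacks0 k) => _ _ /eqP + _.
  by rewrite mulf_eq0 gt_eqF //= => /eqP.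
- case: (slacks0 k) => _ _ _ /eqP.
  by rewrite mulf_eq0 invr_eq0 (negbTE s_neq0) orbF -mulrA mulf_eq0 gt_eqF //= => /eqP.
Qed.

Definition extremal_graph : Prop :=
  (forall j k : 'I_n, mu j = mu k)
  \/ ((1 <= i)%N /\ bidegreed adj /\
      (forall j k : 'I_n, j = 0%N :> nat -> (0 < k)%N ->
          mu k < mu j /\ deg adj j = n.-1 /\ (deg adj k < deg adj j)%N) /\
      (forall j k : 'I_n, (0 < j)%N -> (0 < k)%N ->
          mu j = mu k /\ deg adj j = deg adj k)).

Lemma excess_le_first k : excess k <= excess v0.
Proof.
rewrite /excess /=; case: ltnP => [ki | _]; last by case: ifP => // _; rewrite subr_ge0 hord.
by rewrite (leq_ltn_trans (leq0n k) ki) lerD2r hord.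
Qed.

Section TightGraph.
Hypothesis tight : tight_conditions.

Lemma tight_md k : mu k = mu i + excess k.
Proof. by case: tight => _ _ /(_ k) md0 _; lra. Qed.

Lemma excess_full_deg j : excess j != 0 -> deg adj j = n.-1.
Proof.
case: tight => _ nonadj0 _ _ cj; apply: (proj2 (deg_fullP hG j)) => k kj.
rewrite hG.1; apply: contraNT cj => not_kj; apply/eqP.
by apply: nonadj0 not_kj; rewrite eq_sym.
Qed.

Section Hub.
Hypothesis hub_excess : 0 < excess v0.

Lemma hub_index : (0 < i)%N.
Proof. by move: hub_excess; rewrite /excess /=; case: ifP; rewrite ?ltxx. Qed.

Lemma hub_full : deg adj v0 = n.-1.
Proof. exact/excess_full_deg/lt0r_neq0. Qed.

Lemma hub_adj k : k != v0 -> adj k v0.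
Proof. by move=> kv0; rewrite hG.1; apply: (proj1 (deg_fullP hG v0)) hub_full _ kv0. Qed.

(* Tightness along the edge k v0 forces N d_k = d_v0. *)
Lemma hub_ratio k : k != v0 -> N * dg k = dg v0.
Proof.
case: tight => adj0 _ _ _ kv0; have /eqP := adj0 _ _ (hub_adj kv0).
by rewrite mulf_eq0 (gt_eqF hub_excess) orbF subr_eq0 => /eqP.
Qed.

Lemma others_deg k k' : k != v0 -> k' != v0 -> deg adj k = deg adj k'.
Proof.
move=> kv0 k'v0; apply/eqP; rewrite -(eqr_nat R); apply/eqP.
by apply: (mulfI (lt0r_neq0 N_gt0)); rewrite !hub_ratio.
Qed.

(* Otherwise the graph would be complete, hence regular with constant m + d,
   and the hub would have no excess. *)
Lemma others_deg_lt k : k != v0 -> (deg adj k < n.-1)%N.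
Proof.
move=> kv0; rewrite ltn_neqAle deg_le // andbT; apply/eqP => dk.
have regular x : deg adj x = n.-1.
  by case: (eqVneq x v0) => [->|xv0]; rewrite ?hub_full // (others_deg xv0 kv0).
have := hub_excess; rewrite /excess; rewrite hub_index.
by rewrite !(regular_md hn hconn R regular) subrr ltxx.
Qed.

(* And, being of degree < n - 1, they carry no excess. *)
Lemma others_excess0 k : k != v0 -> excess k = 0.
Proof.
move=> kv0; apply/eqP; apply: contraT => ck.
by have := others_deg_lt kv0; rewrite (excess_full_deg ck) ltnn.
Qed.

End Hub.

Lemma tight_extremal : extremal_graph.
Proof.
have [hub_excess | excess0] := ltrP 0 (excess v0); last first.
  left=> j k; rewrite (tight_md j) (tight_md k); congr (_ + _).
  suff excess_eq0 x : excess x = 0 by rewrite !excess_eq0.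
  by apply/le_anti; rewrite excess_ge0 (le_trans (excess_le_first x)).
have full := hub_full hub_excess; have deg_lt := others_deg_lt hub_excess.
have degE := others_deg hub_excess; have others0 := others_excess0 hub_excess.
right; split; first exact: hub_index.
split.
  have v1_v0 : v1 != v0 by rewrite neq_v0.
  apply: (bidegreed_hub v1_v0) => [k kv0|]; first exact: degE.
  by rewrite full neq_ltn deg_lt.
split=> [j k j0 k_gt0 | j k j_gt0 k_gt0].
  have -> : j = v0 by apply: val_inj.
  rewrite full deg_lt ?neq_v0 //; split=> //.
  by rewrite (tight_md v0) (tight_md k) others0 ?neq_v0 // addr0 ltrDl.
rewrite (tight_md j) (tight_md k) !others0 ?neq_v0 //; split=> //.
by apply: degE; rewrite neq_v0.
Qed.

End TightGraph.

(* Conversely, the extremal graphs satisfy all the tightness conditions: in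
   the hub case the only positive excess sits at the hub, whose degree is
   Delta = n - 1, and N = d_hub / d_k on every edge k v0. *)
Lemma extremal_tight : extremal_graph -> tight_conditions.
Proof.
case=> [md_const | [i_gt0 [_ [hub others]]]].
  have excess0 k : excess k = 0 by rewrite /excess (md_const k i) subrr; case: ifP.
  by split=> [k j|k j|k|k]; rewrite ?excess0 ?mulr0 // addr0 (md_const i k) subrr.
have v1_v0 : v1 != v0 by rewrite neq_v0.
have md_others k : k != v0 -> mu k = mu i.
  by move=> kv0; apply: (others k i _ i_gt0).1; rewrite -neq_v0.
have excess0 k : k != v0 -> excess k = 0.
  by move=> kv0; rewrite /excess md_others // subrr; case: ifP.
have [_ [full _]] := hub v0 v1 erefl isT.
have degE k : k != v0 -> deg adj k = deg adj v1.
  by move=> kv0; apply: (others k v1 _ isT).2; rewrite -neq_v0.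
have N_hub := Nratio_hub hG hn hconn R v1_v0 full degE.
have adj_v0 k : k != v0 -> adj k v0.
  by move=> kv0; rewrite hG.1; apply: (proj1 (deg_fullP hG v0)) full _ kv0.
split=> [k j kj | k j jk kj | k | k].
- case: (eqVneq j v0) => [jv0 | /excess0 ->]; last by rewrite mulr0.
  have kv0 : k != v0 by apply: contraTneq kj => ->; rewrite jv0 hG.2.
  by rewrite jv0 N_hub (degE k kv0) divfK ?subrr ?mul0r // gt_eqF.
- case: (eqVneq j v0) => [jv0 | /excess0 //].
  by move: kj; rewrite jv0 adj_v0 // -jv0 eq_sym.
- case: (eqVneq k v0) => [-> | kv0]; last by rewrite excess0 // md_others // subrr addr0.
  by rewrite /excess /= i_gt0 addrA addrNK subrr.
- case: (eqVneq k v0) => [-> | /excess0 ->]; last by rewrite mulr0.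
  suff -> : maxdeg adj = deg adj v0 by rewrite subrr mul0r.
  apply/eqP; rewrite eqn_leq deg_le_maxdeg andbT full.
  by apply/bigmax_leqP => j _; apply: deg_le.
Qed.

(* Every eigenvalue of Q is at most theta in absolute value, and one reaching
   theta makes w an exact eigenvector (Q is positive along the edges of the
   connected graph). *)
Lemma eigenvalue_le_bound l : eigenvalue Q l ->
  `|l| <= bound /\ (`|l| = bound -> forall k, \sum_j Q k j * weight j = bound * weight k).
Proof.
case/eigenvalueP=> v v_eigen v_neq0.
have Q_ge0 := @signless_laplacian_ge0 n adj R.
have Q_sym := @signless_laplacian_sym n adj hG R.
have Q_adj := @signless_laplacian_adj n adj R.
split; first exact: (eigen_norm_le (th := bound) weight_gt0 Q_ge0 Q_sym weight_subeigen
                       v_eigen v_neq0).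
exact: (eigen_extremal_tight (th := bound) weight_gt0 Q_ge0 Q_sym weight_subeigen
          v_eigen v_neq0 Q_adj hconn).
Qed.

Lemma bound_eigenvalue :
  (forall k, \sum_j Q k j * weight j = bound * weight k) -> eigenvalue Q bound.
Proof.
move=> tight; apply/eigenvalueP; exists (\row_j weight j).
  apply/rowP => j; rewrite !mxE -tight.
  by apply: eq_bigr => k _; rewrite mxE signless_laplacian_sym // mulrC.
by apply/eqP => /rowP /(_ i); rewrite !mxE; apply/eqP; rewrite gt_eqF ?weight_gt0.
Qed.

End WeightedBound.

Theorem corollary5 (R : rcfType) (n : nat) (adj : rel 'I_n)
  (hn : (2 <= n)%N) (hG : simple_graph adj) (hconn : connected_graph adj)
  (hord : forall i j : 'I_n, (i <= j)%N -> md R adj j <= md R adj i)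
  (i : 'I_n) :
  let Delta := ((maxdeg adj)%:R : R) in
  let N := Nratio R adj in
  let bound :=
    (md R adj i + Delta - N
     + Num.sqrt ((md R adj i - Delta + N) ^+ 2
                 + 4 * N * \sum_(k < n | (k < i)%N) (md R adj k - md R adj i))) / 2 in
  exists rho : R,
    is_spectral_radius (signless_laplacian R adj) rho /\
    rho <= bound /\
    (rho = bound <->
      ((forall j k : 'I_n, md R adj j = md R adj k)
       \/ ((1 <= i)%N /\ bidegreed adj /\
           (forall j k : 'I_n, j = 0%N :> nat -> (0 < k)%N ->
               md R adj k < md R adj j /\ deg adj j = n.-1 /\ (deg adj k < deg adj j)%N) /\
           (forall j k : 'I_n, (0 < j)%N -> (0 < k)%N ->
               md R adj j = md R adj k /\ deg adj j = deg adj k)))).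
Proof.
move=> Delta N theta; change theta with (bound R adj i).
have Q_sym := @signless_laplacian_sym n adj hG R.
have [rho [[l0 l0_eig l0E] rho_max]] :=
  spectral_radius_exists (symmetric_mx_eigenvalue (ltnW hn) Q_sym).
have [l0_le l0_tight] := eigenvalue_le_bound hn hG hconn hord i l0_eig.
exists rho; split; first by split=> //; exists l0.
split; first by rewrite -l0E.
split=> [rhoE | extremal].
  apply: (tight_extremal hn hG hconn hord); apply/(weight_eigenP hn hG hconn hord i).
  by apply: l0_tight; rewrite l0E.
apply/le_anti; rewrite -{1}l0E l0_le /=; apply: le_trans (ler_norm _) (rho_max _ _).
apply: (bound_eigenvalue hn hG hconn hord).
by apply/(weight_eigenP hn hG hconn hord i); apply: extremal_tight.
Qed.
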